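(* Let $\mu$ be a fuzzy subset of a fuzzy $\Gamma$-hypersemigroup $(M,\circ)$ and let $\nu$ be a fuzzy $\Gamma$-hyper bi-ideal of $(M,\circ)$. Then for every $\gamma\in\Gamma$, both $\mu\circ\gamma\circ\nu$ and $\nu\circ\gamma\circ\mu$ are fuzzy $\Gamma$-hyper bi-ideals of $(M,\circ)$.
   Context: $M,\Gamma$ are nonempty sets; a fuzzy subset of $M$ is a map $M\to[0,1]$. A fuzzy $\Gamma$-hyperoperation assigns to each $(a,\gamma,b)\in M\times\Gamma\times M$ a fuzzy subset $a\circ\gamma\circ b$. For $a\in M$ and fuzzy $\mu$: $(a\circ\gamma\circ\mu)(r)=\bigvee_{t\in M}((a\circ\gamma\circ t)(r)\wedge\mu(t))$ if $\mu\ne0$, else $0$; $(\mu\circ\gamma\circ a)(r)=\bigvee_{t\in M}(\mu(t)\wedge(t\circ\gamma\circ a)(r))$ if $\mu\ne0$, else $0$. For fuzzy $\mu,\nu$: $(\mu\circ\gamma\circ\nu)(t)=\bigvee_{p,q\in M}(\mu(p)\wedge(p\circ\gamma\circ q)(t)\wedge\nu(q))$. $(M,\circ)$ is a fuzzy $\Gamma$-hypersemigroup if $(a\circ\alpha\circ b)\circ\beta\circ c=a\circ\alpha\circ(b\circ\beta\circ c)$ for all $a,b,c\in M$, $\alpha,\beta\in\Gamma$. For fuzzy sets, $\mu\subseteq\nu$ means $\mu(x)\le\nu(x)$ for all $x$. A fuzzy sub $\Gamma$-hypersemigroup is a fuzzy subset $\mu$ with $\mu\circ\gamma\circ\mu\subseteq\mu$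 for all $\gamma\in\Gamma$. A fuzzy $\Gamma$-hyper bi-ideal is a fuzzy sub $\Gamma$-hypersemigroup $\mu$ with $(\mu\circ\alpha\circ y)\circ\beta\circ\mu\subseteq\mu$ for all $y\in M$, $\alpha,\beta\in\Gamma$. *)

From mathcomp Require Import all_boot all_order all_algebra.
From mathcomp Require Import all_classical all_reals.
Set Implicit Arguments. Unset Strict Implicit. Unset Printing Implicit Defensive.
Import Order.TTheory GRing.Theory Num.Theory.
Local Open Scope ring_scope.
Local Open Scope classical_set_scope.

Section FuzzyGamma.
Variables (R : realType) (M G : Type).

Definition is_fuzzy (mu : M -> R) : Prop := forall x, 0 <= mu x <= 1.

(* a fuzzy Gamma-hyperoperation: op a g b is the fuzzy subset a o g o b *)
Variable op : M -> G -> M -> M -> R.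

Definition nonzero (mu : M -> R) : Prop := mu <> (fun _ => 0).

Definition fz_el_fz (a : M) (g : G) (mu : M -> R) : M -> R := fun r =>
  if pselect (nonzero mu)
  then sup (range (fun t => Num.min (op a g t r) (mu t)))
  else 0.

Definition fz_fz_el (mu : M -> R) (g : G) (a : M) : M -> R := fun r =>
  if pselect (nonzero mu)
  then sup (range (fun t => Num.min (mu t) (op t g a r)))
  else 0.

Definition fz_fz_fz (mu : M -> R) (g : G) (nu : M -> R) : M -> R := fun t =>
  sup (range (fun pq : M * M =>
    Num.min (mu pq.1) (Num.min (op pq.1 g pq.2 t) (nu pq.2)))).

Definition fz_subset (mu nu : M -> R) : Prop := forall x, mu x <= nu x.

Definition fuzzy_hypersemigroup : Prop :=
  forall (a b c : M) (al be : G),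
    fz_fz_el (op a al b) be c = fz_el_fz a al (op b be c).

Definition fuzzy_sub_hypersemigroup (mu : M -> R) : Prop :=
  is_fuzzy mu /\ forall g : G, fz_subset (fz_fz_fz mu g mu) mu.

Definition fuzzy_hyper_bi_ideal (mu : M -> R) : Prop :=
  fuzzy_sub_hypersemigroup mu /\
  forall (y : M) (al be : G), fz_subset (fz_fz_fz (fz_fz_el mu al y) be mu) mu.

End FuzzyGamma.

(** For a level [0 <= e], the strict cut [e < (mu o g o nu) t] means that
  [t] is e-above some [p o g o q] with [p] e-above in [mu] and [q] in [nu];
  likewise for the mixed products, whose special value 0 on the zero fuzzy
  set is harmless because [0 <= e].  At a fixed level, associativity moves
  witnesses between [(a o al o b) o be o c] and [a o al o (b o be o c)], and
  the bi-ideal property of [nu] says that a point reached from two e-points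
  of [nu] through [q1 o al o y o be o q2] is itself an e-point of [nu].
  Regrouping the witnesses of a product of copies of [mu o g o nu] (or
  [nu o g o mu]) so that such a segment appears proves every required
  inclusion level by level, which is enough. *)

From mathcomp Require Import all_boot all_order all_algebra.
From mathcomp Require Import all_classical all_reals.
Import Order.TTheory GRing.Theory Num.Theory.
Local Open Scope ring_scope.
Local Open Scope classical_set_scope.
Set Implicit Arguments. Unset Strict Implicit.

Lemma lt_sup_rangeP (R : realType) (T : Type) (f : T -> R) (c e : R) :
  inhabited T -> (forall t, f t <= c) ->
  e < sup (range f) <-> exists t, e < f t.
Proof.
move=> [t0] fc; split.
  case/sup_gt; first by exists (f t0), t0.
  by move=> _ [t _ <-] lt_e; exists t.
move=> [t lt_e]; apply: (lt_le_trans lt_e); apply: ub_le_sup; last by exists t.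
by exists c => _ [u _ <-].
Qed.

Lemma sup_range_in01 (R : realType) (T : Type) (f : T -> R) :
  inhabited T -> (forall t, 0 <= f t <= 1) -> 0 <= sup (range f) <= 1.
Proof.
move=> [t0] f01; have [f0 f1] := andP (f01 t0).
apply/andP; split.
  apply: (le_trans f0); apply: ub_le_sup; last by exists t0.
  by exists 1 => _ [u _ <-]; case/andP: (f01 u).
by apply: ge_sup; [exists (f t0), t0 | move=> _ [u _ <-]; case/andP: (f01 u)].
Qed.

Section Cuts.
Variables (R : realType) (M G : Type) (op : M -> G -> M -> M -> R).
Hypothesis inhM : inhabited M.
Hypothesis op_fuzzy : forall (a : M) (g : G) (b : M), is_fuzzy (op a g b).

Let op_le1 a g b r : op a g b r <= 1.
Proof. by case/andP: (op_fuzzy a g b r). Qed.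

Let inhMM : inhabited (M * M).
Proof. by case: inhM => m; constructor; exact: (m, m). Qed.

Lemma nonzero_lt (mu : M -> R) t e : 0 <= e -> e < mu t -> nonzero mu.
Proof. by move=> e0 lt_e mu0; move: lt_e; rewrite mu0 ltNge e0. Qed.

Lemma lt_fz_fz_elP mu g a r e : 0 <= e ->
  e < fz_fz_el op mu g a r <-> exists t, e < mu t /\ e < op t g a r.
Proof.
move=> e0; rewrite /fz_fz_el; case: pselect => [_ | mu0] /=.
  rewrite (lt_sup_rangeP (c := 1) _ inhM); last by move=> t; rewrite ge_min op_le1 orbT.
  split=> -[t]; last by move=> ?; exists t; rewrite lt_min; apply/andP.
  by rewrite lt_min => /andP ?; exists t.
split=> [|[t [lt_mu _]]]; first by rewrite ltNge e0.
by case: mu0; exact: nonzero_lt lt_mu.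
Qed.

Lemma lt_fz_el_fzP mu g a r e : 0 <= e ->
  e < fz_el_fz op a g mu r <-> exists t, e < op a g t r /\ e < mu t.
Proof.
move=> e0; rewrite /fz_el_fz; case: pselect => [_ | mu0] /=.
  rewrite (lt_sup_rangeP (c := 1) _ inhM); last by move=> t; rewrite ge_min op_le1.
  split=> -[t]; last by move=> ?; exists t; rewrite lt_min; apply/andP.
  by rewrite lt_min => /andP ?; exists t.
split=> [|[t [_ lt_mu]]]; first by rewrite ltNge e0.
by case: mu0; exact: nonzero_lt lt_mu.
Qed.

Lemma lt_fz_fz_fzP mu g nu t e :
  e < fz_fz_fz op mu g nu t <->
  exists p q, [/\ e < mu p, e < op p g q t & e < nu q].
Proof.
rewrite /fz_fz_fz (lt_sup_rangeP (c := 1) _ inhMM).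
  split=> [[[p q]] | [p [q [? ? ?]]]]; last by exists (p, q); rewrite /= !lt_min; apply/and3P.
  by rewrite /= !lt_min => /and3P[? ? ?]; exists p, q.
by move=> [p q]; rewrite /= !ge_min op_le1 !orbT.
Qed.

Lemma fz_fz_fz_fuzzy mu g nu :
  is_fuzzy mu -> is_fuzzy nu -> is_fuzzy (fz_fz_fz op mu g nu).
Proof.
move=> mu01 nu01 t; apply: sup_range_in01 => // -[p q] /=.
rewrite !le_min !ge_min.
have [-> ->] := andP (mu01 p); have [-> _] := andP (nu01 q).
by have [-> _] := andP (op_fuzzy p g q t).
Qed.

Lemma fz_subset_cuts (mu nu : M -> R) : is_fuzzy nu ->
  (forall x e, 0 <= e -> e < mu x -> e < nu x) -> fz_subset mu nu.
Proof.
move=> nu01 cut x; rewrite leNgt; apply/negP => lt_nu.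
by have := cut x _ (proj1 (andP (nu01 x))) lt_nu; rewrite ltxx.
Qed.

Hypothesis op_assoc : fuzzy_hypersemigroup op.

(* The two sides of [op_assoc] evaluated at [r] and cut at [e]. *)
Lemma cut_assoc a al b be c r e : 0 <= e ->
  (exists p, e < op a al b p /\ e < op p be c r) <->
  (exists s, e < op b be c s /\ e < op a al s r).
Proof.
move=> e0; rewrite -(lt_fz_fz_elP _ _ _ _ e0) op_assoc lt_fz_el_fzP //.
by split=> -[s [? ?]]; exists s.
Qed.

Lemma cut_assocLR a al b be c p r e : 0 <= e ->
  e < op a al b p -> e < op p be c r ->
  exists s, e < op b be c s /\ e < op a al s r.
Proof. by move=> e0 ? ?; apply/(cut_assoc _ _ _ _ _ _ e0); exists p. Qed.

Lemma cut_assocRL a al b be c s r e : 0 <= e ->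
  e < op b be c s -> e < op a al s r ->
  exists p, e < op a al b p /\ e < op p be c r.
Proof. by move=> e0 ? ?; apply/(cut_assoc _ _ _ _ _ _ e0); exists s. Qed.

Variable nu : M -> R.
Hypothesis nu_bi : fuzzy_hyper_bi_ideal op nu.

Let nu_fuzzy : is_fuzzy nu. Proof. exact: nu_bi.1.1. Qed.

Lemma bi_ideal_cut q1 al y u be q2 s e : 0 <= e ->
  e < nu q1 -> e < op q1 al y u -> e < op u be q2 s -> e < nu q2 ->
  e < nu s.
Proof.
move=> e0 nu_q1 q1y yq2 nu_q2; apply: (lt_le_trans _ (nu_bi.2 y al be s)).
apply/lt_fz_fz_fzP; exists u, q2; split=> //.
by apply/(lt_fz_fz_elP _ _ _ _ e0); exists q1.
Qed.

Lemma fz_fz_fz_bi_idealr mu g :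
  is_fuzzy mu -> fuzzy_hyper_bi_ideal op (fz_fz_fz op mu g nu).
Proof.
move=> mu01; have prod01 := fz_fz_fz_fuzzy g mu01 nu_fuzzy.
split; [split=> // be | move=> y al be]; apply: fz_subset_cuts => // t e e0.
- case/lt_fz_fz_fzP => p [q [/lt_fz_fz_fzP[p1 [q1 [mu1 op1 nu1]]] pq
    /lt_fz_fz_fzP[p2 [q2 [_ op2 nu2]]]]].
  have [s [q1q s1]] := cut_assocLR e0 op1 pq.
  have [u [q1p2 uq2]] := cut_assocRL e0 op2 q1q.
  by apply/lt_fz_fz_fzP; exists p1, s; split; last exact: (bi_ideal_cut e0 nu1 q1p2 uq2).
- case/lt_fz_fz_fzP => u [q [/(lt_fz_fz_elP _ _ _ _ e0)[w [/lt_fz_fz_fzP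
    [p1 [q1 [mu1 op1 nu1]]] wy]] uq /lt_fz_fz_fzP[p2 [q2 [_ op2 nu2]]]]].
  have [s1 [q1y p1s1]] := cut_assocLR e0 op1 wy.
  have [s2 [s1q p1s2]] := cut_assocLR e0 p1s1 uq.
  have [v [s1p2 vq2]] := cut_assocRL e0 op2 s1q.
  have [s3 [yp2 q1s3]] := cut_assocLR e0 q1y s1p2.
  by apply/lt_fz_fz_fzP; exists p1, s2; split; last exact: (bi_ideal_cut e0 nu1 q1s3 vq2).
Qed.

Lemma fz_fz_fz_bi_ideall mu g :
  is_fuzzy mu -> fuzzy_hyper_bi_ideal op (fz_fz_fz op nu g mu).
Proof.
move=> mu01; have prod01 := fz_fz_fz_fuzzy g nu_fuzzy mu01.
split; [split=> // be | move=> y al be]; apply: fz_subset_cuts => // t e e0.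
- case/lt_fz_fz_fzP => p [q [/lt_fz_fz_fzP[p1 [q1 [nu1 op1 _]]] pq
    /lt_fz_fz_fzP[p2 [q2 [nu2 op2 mu2]]]]].
  have [v [pp2 vq2]] := cut_assocRL e0 op2 pq.
  by apply/lt_fz_fz_fzP; exists v, q2; split=> //; exact: (bi_ideal_cut e0 nu1 op1 pp2).
- case/lt_fz_fz_fzP => u [q [/(lt_fz_fz_elP _ _ _ _ e0)[w [/lt_fz_fz_fzP
    [p1 [q1 [nu1 op1 _]]] wy]] uq /lt_fz_fz_fzP[p2 [q2 [nu2 op2 mu2]]]]].
  have [v [up2 vq2]] := cut_assocRL e0 op2 uq.
  have [s [q1y p1s]] := cut_assocLR e0 op1 wy.
  by apply/lt_fz_fz_fzP; exists v, q2; split=> //; exact: (bi_ideal_cut e0 nu1 p1s up2).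
Qed.

End Cuts.

Theorem theorem4p14 (R : realType) (M G : Type)
  (hM : inhabited M) (hG : inhabited G)
  (op : M -> G -> M -> M -> R)
  (hop : forall (a : M) (g : G) (b : M), is_fuzzy (op a g b))
  (hsg : fuzzy_hypersemigroup op)
  (mu nu : M -> R) (hmu : is_fuzzy mu)
  (hnu : fuzzy_hyper_bi_ideal op nu) :
  forall g : G,
    fuzzy_hyper_bi_ideal op (fz_fz_fz op mu g nu) /\
    fuzzy_hyper_bi_ideal op (fz_fz_fz op nu g mu).
Proof.
by move=> g; split; [apply: fz_fz_fz_bi_idealr | apply: fz_fz_fz_bi_ideall].
Qed.
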